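(* Let $f(\alpha,\beta)$ and $h(\alpha)$ be functions with $f(\alpha,\beta)=-f(\beta,\alpha)$ for all $\alpha,\beta$. If for all $\alpha,\beta,\gamma$ $$f(\alpha,\beta)h(\alpha)h(\beta)+f(\beta,\gamma)h(\beta)h(\gamma)+f(\gamma,\alpha)h(\gamma)h(\alpha)=f(\alpha,\beta)f(\beta,\gamma)f(\gamma,\alpha),$$ then for all $\alpha,\beta,\gamma,\delta$ $$f(\alpha,\beta)f(\beta,\gamma)f(\gamma,\alpha)+f(\beta,\alpha)f(\alpha,\delta)f(\delta,\beta)+f(\gamma,\beta)f(\beta,\delta)f(\delta,\gamma)+f(\alpha,\gamma)f(\gamma,\delta)f(\delta,\alpha)=0.$$ Conversely, if the latter four-term identity holds for all $\alpha,\beta,\gamma,\delta$, then the former three-term identity holds with $h(\alpha)=if(\alpha,\delta)$, for any fixed $\delta$. *)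

From mathcomp Require Import all_boot all_order all_algebra.
Set Implicit Arguments. Unset Strict Implicit. Unset Printing Implicit Defensive.
Import Order.TTheory GRing.Theory Num.Theory.
Local Open Scope ring_scope.

Definition antisym (C : numClosedFieldType) (T : Type) (f : T -> T -> C) :=
  forall a b, f a b = - f b a.

Definition three_term (C : numClosedFieldType) (T : Type)
  (f : T -> T -> C) (h : T -> C) :=
  forall a b c,
    f a b * h a * h b + f b c * h b * h c + f c a * h c * h a
    = f a b * f b c * f c a.

Definition four_term (C : numClosedFieldType) (T : Type) (f : T -> T -> C) :=
  forall a b c d,
    f a b * f b c * f c a + f b a * f a d * f d b
    + f c b * f b d * f d c + f a c * f c d * f d a = 0.

(* The triangles (a,b,c), (b,a,d), (c,b,d), (a,c,d) are the consistently
   oriented faces of the tetrahedron abcd, so every edge occurs in two of them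
   with opposite orientations; by antisymmetry the edge terms f(x,y)h(x)h(y) of
   the three-term identity cancel over the four faces, which leaves the
   four-term identity.  Conversely, for h = k f(., d) with k^2 = -1 we have
   h(x)h(y) = -f(x,d)f(y,d), so the edge terms of (a,b,c) are, up to sign, the
   three face products of the four-term identity that involve d. *)
From mathcomp Require Import all_boot all_order all_algebra.
From mathcomp Require Import ring.
Set Implicit Arguments. Unset Strict Implicit. Unset Printing Implicit Defensive.
Import Order.TTheory GRing.Theory Num.Theory.
Local Open Scope ring_scope.

Section Tetrahedron.

Variables (R : comPzRingType) (T : Type) (f : T -> T -> R).
Hypothesis fN : forall a b, f a b = - f b a.

Definition cyc_prod a b c := f a b * f b c * f c a.

Definition cyc_pair_sum (h : T -> R) a b c :=
  f a b * h a * h b + f b c * h b * h c + f c a * h c * h a.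

Definition tetra_sum (g : T -> T -> T -> R) a b c d :=
  g a b c + g b a d + g c b d + g a c d.

Lemma tetra_sum_cyc_pair_sum h a b c d : tetra_sum (cyc_pair_sum h) a b c d = 0.
Proof.
rewrite /tetra_sum /cyc_pair_sum.
rewrite (fN b a) (fN c b) (fN a c) (fN d b) (fN d c) (fN d a).
by ring.
Qed.

Lemma tetra_sum_cyc_prod k d a b c : k ^+ 2 = -1 ->
  tetra_sum cyc_prod a b c d
  = cyc_prod a b c - cyc_pair_sum (fun x => k * f x d) a b c.
Proof.
move=> k2N1; rewrite /tetra_sum /cyc_prod /cyc_pair_sum.
rewrite (fN b a) (fN c b) (fN a c) (fN d b) (fN d c) (fN d a).
by ring: k2N1.
Qed.

End Tetrahedron.

Theorem theorem2 (C : numClosedFieldType) (T : Type) :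
  (forall (f : T -> T -> C) (h : T -> C),
      antisym f -> three_term f h -> four_term f) /\
  (forall f : T -> T -> C,
      antisym f -> four_term f ->
      forall d : T, three_term f (fun a => 'i * f a d)).
Proof.
split.
- move=> f h fN h3 a b c d.
  have h3' : forall x y z, cyc_pair_sum f h x y z = cyc_prod f x y z := h3.
  rewrite -(tetra_sum_cyc_pair_sum fN h a b c d).
  by rewrite /tetra_sum !h3'.
- move=> f fN h4 d a b c; apply/eqP.
  rewrite eq_sym -subr_eq0 -(tetra_sum_cyc_prod fN d a b c (sqrCi C)).
  exact/eqP/h4.
Qed.
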